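(* In the single-access setting below (i.e. $n=1$), for every $k\ge\max(m,1)$: $\mathrm{Valid}(k)\Rightarrow\mathrm{Valid}(k+1)$. Setting: fix $r\ge0$, a set $V$ of values, one index transformer $e:\mathbb{Z}^r\to\mathbb{Z}$, $m\ge0$ condition predicates $g_1,\dots,g_m:\mathbb{Z}^r\to\{\mathsf{true},\mathsf{false}\}$, a function $F:V\times\{\mathsf{true},\mathsf{false}\}^m\to\{\mathsf{true},\mathsf{false}\}$, and a formula $P\in\Phi_{\wedge,\vee}$ whose atoms are fold-atoms $a_\gamma$, $\gamma:\mathbb{Z}^r\to\{\mathsf{true},\mathsf{false}\}$. Define $\mathrm{Valid}(k)$ to be: for all $u:[k]\to\mathbb{Z}^r$ and all $X:\mathbb{Z}^{[k]}\to V$, if $P^k(u)$ then $F\big(X(\alpha(u)),\mathrm{fold}_k(g_1,u),\dots,\mathrm{fold}_k(g_m,u)\big)=\mathsf{true}$, where $\alpha(u):[k]\to\mathbb{Z}$, $j\mapsto e(u(j))$.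
   Context: $[k]=\{1,\dots,k\}$. For $\gamma:A\to\{\mathsf{true},\mathsf{false}\}$ and $u:[k]\to A$, $\mathrm{fold}_k(\gamma,u)=\bigwedge_{j\in[k]}\gamma(u(j))$. $\Phi_{\wedge,\vee}$ is the set of negation-free formulas built from atoms with $\wedge,\vee$, and $P^k(u)$ is the truth value of $P$ when each atom $a_\gamma$ is interpreted as $\mathrm{fold}_k(\gamma,u)$. Interpretation in the paper: $k$ is the rank of the single aggregated axis of a rewrite rule; $u$ bundles all integer maps on that axis (tensor shape, operator attributes, the output access); $P$ encodes precondition, validity of the LHS expression and validity of the access; $X$ is the input tensor; $F$ is the scalar function (''scalarf'') comparing LHS and RHS values; $\mathrm{Valid}(k)$ says the rule holds at rank $k$. *)

From mathcomp Require Import all_boot all_order all_algebra.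
Set Implicit Arguments. Unset Strict Implicit. Unset Printing Implicit Defensive.

Definition Zvec (r : nat) := 'I_r -> int.

Definition fold_k (A : Type) (k : nat) (gamma : A -> bool) (u : 'I_k -> A) : bool :=
  \big[andb/true]_(j < k) gamma (u j).

Inductive formula (A : Type) : Type :=
  | FAtom of (A -> bool)
  | FAnd of formula A & formula A
  | FOr of formula A & formula A.

Fixpoint evalP (A : Type) (k : nat) (P : formula A) (u : 'I_k -> A) : bool :=
  match P with
  | FAtom gamma => fold_k gamma u
  | FAnd P1 P2 => evalP P1 u && evalP P2 u
  | FOr P1 P2 => evalP P1 u || evalP P2 u
  end.

Definition Valid (r : nat) (V : Type) (e : Zvec r -> int) (m : nat)
    (g : 'I_m -> Zvec r -> bool) (F : V -> {ffun 'I_m -> bool} -> bool)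
    (P : formula (Zvec r)) (k : nat) : Prop :=
  forall (u : 'I_k -> Zvec r) (X : ('I_k -> int) -> V),
    evalP P u ->
    F (X (fun j => e (u j))) [ffun i => fold_k (g i) u] = true.

(** For each condition [g i] that fails on [u : [k+1] -> Z^r], pick one index
    where it fails. These are at most [m <= k] indices, so some index [j0] is
    not picked. Deleting [j0] from [u] gives [u' : [k] -> Z^r] on which every
    [g i] folds to the same value as on [u]; and since deleting an index can
    only turn folds from false to true, the negation-free precondition [P]
    still holds on [u']. The tensor [X] is arbitrary, so validity at rank [k]
    applied to [u'] and a constant tensor yields validity at rank [k+1]. *)

From mathcomp Require Import all_boot all_order all_algebra.

Set Implicit Arguments.
Unset Strict Implicit.

Lemma fold_kP (A : Type) (k : nat) (gamma : A -> bool) (u : 'I_k -> A) :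
  reflect (forall j, gamma (u j)) (fold_k gamma u).
Proof. by rewrite /fold_k big_andE; apply: forallP. Qed.

Lemma evalP_mono (A : Type) (k k' : nat) (P : formula A)
    (u : 'I_k -> A) (u' : 'I_k' -> A) :
  (forall gamma, fold_k gamma u -> fold_k gamma u') ->
  evalP P u -> evalP P u'.
Proof.
move=> fold_uu'; elim: P => [gamma|P1 IH1 P2 IH2|P1 IH1 P2 IH2] /=.
- exact: fold_uu'.
- by case/andP => /IH1 -> /IH2 ->.
- by case/orP => [/IH1 ->|/IH2 ->]; rewrite ?orbT.
Qed.

Lemma fold_k_lift (A : Type) (k : nat) (gamma : A -> bool)
    (u : 'I_k.+1 -> A) (j0 : 'I_k.+1) :
  fold_k gamma u -> fold_k gamma (fun j => u (lift j0 j)).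
Proof. by move=> /fold_kP gamma_u; apply/fold_kP => j. Qed.

Lemma fold_k_lift_eq (A : Type) (k : nat) (gamma : A -> bool)
    (u : 'I_k.+1 -> A) (j0 : 'I_k.+1) :
  ((forall j, j != j0 -> gamma (u j)) -> gamma (u j0)) ->
  fold_k gamma (fun j => u (lift j0 j)) = fold_k gamma u.
Proof.
move=> gamma_j0; apply/idP/idP; last exact: fold_k_lift.
move=> /fold_kP gamma_u'.
have gamma_off_j0 (j : 'I_k.+1) : j != j0 -> gamma (u j).
  by rewrite eq_sym => /unlift_some [j' -> _]; apply: gamma_u'.
apply/fold_kP => j; have [-> | ] := eqVneq j j0; first exact: gamma_j0 gamma_off_j0.
exact: gamma_off_j0.
Qed.

Lemma exists_notin_codom (aT rT : finType) (f : aT -> rT) :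
  #|aT| < #|rT| -> exists y, y \notin codom f.
Proof.
move=> card_lt; apply/existsP; rewrite -negb_forall; apply/negP => /forallP all_in.
have : #|rT| <= #|aT|.
  rewrite -(size_codom f) (leq_trans _ (card_size _)) //.
  by apply/subset_leq_card/subsetP => y _; apply: all_in.
by rewrite leqNgt card_lt.
Qed.

Theorem mainTheorem3 (r : nat) (V : Type) (e : Zvec r -> int) (m : nat)
    (g : 'I_m -> Zvec r -> bool) (F : V -> {ffun 'I_m -> bool} -> bool)
    (P : formula (Zvec r)) (k : nat) :
  (maxn m 1 <= k)%N ->
  Valid e g F P k -> Valid e g F P k.+1.
Proof.
move=> le_mk valid_k u X Pu.
pose witness (i : 'I_m) := odflt ord0 [pick j | ~~ g i (u j)].
have [j0 j0_free] : exists j0, j0 \notin codom witness.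
  by apply: exists_notin_codom; rewrite !card_ord ltnS (leq_trans _ le_mk) ?leq_maxl.
pose u' j := u (lift j0 j).
have fold_u' i : fold_k (g i) u' = fold_k (g i) u.
  apply: fold_k_lift_eq => g_off_j0; apply/negPn/negP => g_j0.
  have g_witness : ~~ g i (u (witness i)).
    by rewrite /witness; case: pickP => [//|/(_ j0)]; rewrite /= g_j0.
  have witness_j0 : witness i != j0 by apply: contraNneq j0_free => <-; rewrite codom_f.
  by rewrite g_off_j0 in g_witness.
have Pu' : evalP P u' by apply: evalP_mono Pu => gamma; apply: fold_k_lift.
have := valid_k u' (fun _ => X (fun j => e (u j))) Pu'.
by congr (F _ _ = _); apply/ffunP => i; rewrite !ffunE fold_u'.
Qed.
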